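(* Let $\widetilde{\mathfrak{a}}$ be an algebra which is free and finite over the DVR $\mathcal{O}$ such that $\widetilde{\mathfrak{a}}_K=K\otimes\widetilde{\mathfrak{a}}$ has a tight grading $\widetilde{\mathfrak{a}}_K=\bigoplus_{n\ge0}\widetilde{\mathfrak{a}}_{K,n}$ and $\widetilde{\mathfrak{a}}$ has a positive grading $\widetilde{\mathfrak{a}}=\bigoplus_{r\ge0}\widetilde{\mathfrak{a}}_r$ with $K\widetilde{\mathfrak{a}}_r=\widetilde{\mathfrak{a}}_{K,r}$ for each $r$. Then: (a) For each $r\in\mathbb{N}$, $\widetilde{\mathfrak{a}}_r=\widetilde{\mathfrak{a}}\cap\widetilde{\mathfrak{a}}_{K,r}$ and $\sum_{i\ge r}\widetilde{\mathfrak{a}}_i=\widetilde{\mathfrak{a}}\cap\operatorname{rad}^r\widetilde{\mathfrak{a}}_K$; and there is an isomorphism of graded $\mathcal{O}$-algebras $\widetilde{\mathfrak{a}}\to\operatorname{gr}\widetilde{\mathfrak{a}}$ sending $x\in\widetilde{\mathfrak{a}}_r$ to its image in $\widetilde{\operatorname{rad}}^r\widetilde{\mathfrak{a}}/\widetilde{\operatorname{rad}}^{r+1}\widetilde{\mathfrak{a}}=(\operatorname{gr}\widetilde{\mathfrak{a}})_r$. (b) For an $\widetilde{\mathfrak{a}}$-lattice $\widetilde{M}$, the following are equivalent: (i) $\widetilde{M}$ is tight; (ii) $\sum_{i\ge r}\widetilde{\mathfrak{a}}_i\widetilde{M}=\widetilde{\operatorname{rad}}^r\widetilde{M}$ for each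 $r\in\mathbb{N}$; (iii) the $\operatorname{gr}\widetilde{\mathfrak{a}}$-lattice $\operatorname{gr}\widetilde{M}$ is generated by $(\operatorname{gr}\widetilde{M})_0$.
   Context: $\mathcal{O}$: DVR with fraction field $K$. A tight grading of the finite-dimensional $K$-algebra $\widetilde{\mathfrak{a}}_K$ is a positive algebra grading with $\widetilde{\mathfrak{a}}_{K,0}$ semisimple and $\widetilde{\mathfrak{a}}_K$ generated as algebra by $\widetilde{\mathfrak{a}}_{K,0}+\widetilde{\mathfrak{a}}_{K,1}$ (equivalently $\widetilde{\mathfrak{a}}_K\cong\operatorname{gr}\widetilde{\mathfrak{a}}_K$ as graded algebras). The grading of $\widetilde{\mathfrak{a}}$ is a grading as $\mathcal{O}$-algebra with $\widetilde{\mathfrak{a}}\subseteq\widetilde{\mathfrak{a}}_K$. $\widetilde{\operatorname{rad}}^r\widetilde{\mathfrak{a}}=\widetilde{\mathfrak{a}}\cap(\operatorname{rad}\widetilde{\mathfrak{a}}_K)^r$, $\operatorname{gr}\widetilde{\mathfrak{a}}=\bigoplus_r\widetilde{\operatorname{rad}}^r\widetilde{\mathfrak{a}}/\widetilde{\operatorname{rad}}^{r+1}\widetilde{\mathfrak{a}}$. An $\widetilde{\mathfrak{a}}$-lattice is an $\mathcal{O}$-finite torsion-free module; $\widetilde{\operatorname{rad}}^r\widetilde{M}=\widetilde{M}\cap(\operatorname{rad}\widetilde{\mathfrak{a}}_K)^r\widetilde{M}_K$, $\operatorname{gr}\widetilde{M}=\bigoplus_r\widetilde{\operatorname{rad}}^r\widetilde{M}/\widetilde{\operatorname{rad}}^{r+1}\widetilde{M}$.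 $\widetilde{M}$ is tight if $\widetilde{\operatorname{rad}}^r\widetilde{M}=(\widetilde{\operatorname{rad}}^r\widetilde{\mathfrak{a}})\widetilde{M}$ for all $r\in\mathbb{N}$. *)

From HB Require Import structures.
From mathcomp Require Import all_boot all_order all_algebra all_field.
Set Implicit Arguments. Unset Strict Implicit. Unset Printing Implicit Defensive.
Import Order.TTheory GRing.Theory Num.Theory.
Local Open Scope ring_scope.

Definition is_DVR_of (K : fieldType) (O : {pred K}) : Prop :=
  [/\ 1 \in O,
      (forall x y, x \in O -> y \in O -> x - y \in O),
      (forall x y, x \in O -> y \in O -> x * y \in O) &
      exists2 pi, (pi \in O) && (pi^-1 \notin O) &
        forall x, x != 0 -> exists n : int,
          exists2 u, (u \in O) && (u^-1 \in O) & x = u * pi ^ n].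

Definition Ospan (K : fieldType) (O : {pred K}) (V : lmodType K) (b : seq V)
  : V -> Prop :=
  fun v => exists c : nat -> K, (forall i, c i \in O) /\
                                v = \sum_(i < size b) c i *: b`_i.

Definition Kspan (K : fieldType) (V : lmodType K) (S : V -> Prop) : V -> Prop :=
  fun v => exists s : seq (K * V), (forall p, p \in s -> S p.2) /\
                                   v = \sum_(p <- s) p.1 *: p.2.

Definition Osubmod (K : fieldType) (O : {pred K}) (V : lmodType K)
  (S : V -> Prop) : Prop :=
  [/\ S 0, (forall x y, S x -> S y -> S (x + y)) &
          (forall c x, c \in O -> S x -> S (c *: x))].

Definition unit_in (K : fieldType) (A : falgType K) (B : {vspace A}) (u : A)
  : Prop := exists2 z, z \in B & (z * u = 1 /\ u * z = 1).

Definition is_jacobson_radical (K : fieldType) (A : falgType K)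
  (J : {vspace A}) : Prop :=
  forall x, x \in J <-> (forall y, unit_in fullv (1 - y * x)).

Definition semisimple_subalg (K : fieldType) (A : falgType K) (B : {vspace A})
  : Prop :=
  forall x, x \in B -> (forall y, y \in B -> unit_in B (1 - y * x)) -> x = 0.

Definition is_pos_grading (K : fieldType) (A : falgType K)
  (Ak : nat -> {vspace A}) : Prop :=
  (exists N, (forall n, (N <= n)%N -> Ak n = 0%VS) /\
             (\sum_(n < N) Ak n)%VS = fullv /\
             directv (\sum_(n < N) Ak n)%VS) /\
  (forall m n, (Ak m * Ak n <= Ak (m + n)%N)%VS).

Definition is_tight_grading (K : fieldType) (A : falgType K)
  (Ak : nat -> {vspace A}) : Prop :=
  [/\ is_pos_grading Ak, semisimple_subalg (Ak 0%N) &
      agenv (Ak 0%N + Ak 1%N)%VS = fullv].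

Definition radpow (K : fieldType) (A : falgType K) (J : {vspace A}) (r : nat)
  : {vspace A} := iter r (fun U => (J * U)%VS) fullv.

Definition is_pos_grading_O (K : fieldType) (O : {pred K}) (A : falgType K)
  (a : A -> Prop) (ag : nat -> A -> Prop) : Prop :=
  [/\ forall r, Osubmod O (ag r),
      (forall r x, ag r x -> a x),
      (forall x, a x -> exists N (f : nat -> A),
           (forall i, ag i (f i)) /\ x = \sum_(i < N) f i),
      (forall N (f : nat -> A), (forall i, ag i (f i)) ->
           \sum_(i < N) f i = 0 -> forall i, (i < N)%N -> f i = 0) &
      (forall r s x y, ag r x -> ag s y -> ag (r + s)%N (x * y))].

Definition tail_sum (K : fieldType) (A : falgType K) (ag : nat -> A -> Prop)
  (r : nat) : A -> Prop :=
  fun x => exists N (f : nat -> A),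
      (forall i, ag i (f i)) /\ x = \sum_(r <= i < N) f i.

Definition radt (K : fieldType) (A : falgType K) (J : {vspace A})
  (a : A -> Prop) (r : nat) : A -> Prop :=
  fun x => a x /\ x \in radpow J r.

(* The canonical degree-preserving map a -> gr a, x in a_r |-> class of x in
   ~rad^r a / ~rad^{r+1} a, is a (well-defined) bijection in every degree.
   (It is O-linear and multiplicative by the very definition of the
   O-module and algebra structure of gr a, so this is exactly the statement
   that it is an isomorphism of graded O-algebras.) *)
Definition gr_canonical_iso (K : fieldType) (A : falgType K) (J : {vspace A})
  (a : A -> Prop) (ag : nat -> A -> Prop) : Prop :=
  [/\ (forall r x, ag r x -> radt J a r x),
      (forall r x, ag r x -> radt J a r.+1 x -> x = 0) &
      (forall r z, radt J a r z -> exists2 x, ag r x & radt J a r.+1 (z - x))].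

Definition prod_span (K : fieldType) (A : falgType K) (V : lmodType K)
  (act : A -> V -> V) (X : A -> Prop) (M : V -> Prop) : V -> Prop :=
  fun v => exists s : seq (A * V), (forall p, p \in s -> X p.1 /\ M p.2) /\
                                   v = \sum_(p <- s) act p.1 p.2.

Definition radtM (K : fieldType) (A : falgType K) (V : lmodType K)
  (act : A -> V -> V) (J : {vspace A}) (M : V -> Prop) (r : nat) : V -> Prop :=
  fun v => M v /\ prod_span act (fun x => x \in radpow J r) (fun _ => True) v.

Definition is_module_action (K : fieldType) (A : falgType K) (V : lmodType K)
  (act : A -> V -> V) : Prop :=
  [/\ (forall c x y v, act (c *: x + y) v = c *: act x v + act y v),
      (forall c x v w, act x (c *: v + w) = c *: act x v + act x w),
      (forall v, act 1 v = v) &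
      (forall x y v, act (x * y) v = act x (act y v))].

Definition tight_lattice (K : fieldType) (A : falgType K) (V : lmodType K)
  (act : A -> V -> V) (J : {vspace A}) (a : A -> Prop) (M : V -> Prop) : Prop :=
  forall r v, radtM act J M r v <-> prod_span act (radt J a r) M v.

(* gr ~M is generated, as a gr ~a-module, by (gr ~M)_0: in each degree r,
   (gr ~M)_r = (gr ~a)_r (gr ~M)_0, i.e. every z in ~rad^r M is congruent
   modulo ~rad^{r+1} M to a sum of products x m with x in ~rad^r a,
   m in M = ~rad^0 M. *)
Definition gr_generated_in_degree0 (K : fieldType) (A : falgType K)
  (V : lmodType K) (act : A -> V -> V) (J : {vspace A}) (a : A -> Prop)
  (M : V -> Prop) : Prop :=
  forall r z, radtM act J M r z ->
    exists2 w, prod_span act (radt J a r) M w & radtM act J M r.+1 (z - w).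

From HB Require Import structures.
From mathcomp Require Import all_boot all_order all_algebra all_field.
Import GRing.Theory.
Set Implicit Arguments.
Unset Strict Implicit.
Local Open Scope ring_scope.

(* Let T_r be the sum of the homogeneous components of degree >= r of a_K;
   these form a multiplicative filtration with T_N = 0. Each element y x of
   T_1 is nilpotent, so 1 - y x is invertible by a geometric series and
   T_1 lies in the radical; conversely, the degree-0 component of a radical
   element is quasi-regular in the semisimple algebra a_{K,0}, hence zero.
   Generation by degrees 0 and 1 then gives rad^r = T_r. As the lattice
   grading refines the grading of a_K, uniqueness of homogeneous
   decompositions yields a_r = a \cap a_{K,r} and sum_{i>=r} a_i = a \cap T_r,
   which is (a). For (b), an induction using rad^N = 0 lifts generation of
   gr M in degree 0, degree by degree, to tightness. *)

Lemma big_ord_vanish (V : nmodType) (f : nat -> V) B L :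
  (forall i, (B <= i)%N -> f i = 0) -> (B <= L)%N ->
  \sum_(i < L) f i = \sum_(i < B) f i.
Proof.
move=> fB BL; rewrite -!(big_mkord xpredT f) (big_cat_nat (leq0n B) BL) /=.
suff -> : \sum_(B <= i < L) f i = 0 by rewrite addr0.
by rewrite big_nat_cond big1 // => i /andP[/andP[/fB]].
Qed.

Lemma memv_sum_natP (K : fieldType) (vT : vectType K) (Us : nat -> {vspace vT})
    (P : pred nat) n x :
  x \in (\sum_(i < n | P i) Us i)%VS ->
  exists f : nat -> vT, [/\ forall i, f i \in Us i,
    forall i, ~~ P i -> f i = 0 & x = \sum_(i < n) f i].
Proof.
move=> /memv_sumP[vs vsU ->].
exists (fun i => if P i then oapp vs 0 (insub i : option 'I_n) else 0); split.
- move=> i; case: ifP => Pi; last exact: mem0v.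
  case: insubP => [j _ ji|_]; last exact: mem0v.
  by rewrite -ji in Pi *; apply: vsU.
- by move=> i /negbTE->.
- by rewrite big_mkcond; apply: eq_bigr => i _; rewrite valK.
Qed.

Lemma unit_1B_nilpotent (K : fieldType) (A : falgType K) (z : A) n :
  z ^+ n = 0 -> unit_in fullv (1 - z).
Proof.
move=> zn; exists (\sum_(i < n) z ^+ i); first exact: memvf.
have geom : (1 - z) * \sum_(i < n) z ^+ i = 1.
  by rewrite -opprB mulNr -subrX1 zn sub0r opprK.
have comm_z : GRing.comm (1 - z) (\sum_(i < n) z ^+ i).
  apply: commr_sum => i _; apply/commrX/commr_sym.
  by apply: commrB; [exact: commr1 | exact: commr_refl].
by rewrite -comm_z geom.
Qed.

Lemma radpowS (K : fieldType) (A : falgType K) (J : {vspace A}) r s :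
  (r <= s)%N -> (radpow J s <= radpow J r)%VS.
Proof.
have radpowSn t : (radpow J t.+1 <= radpow J t)%VS.
  by elim: t => [|t IH]; [exact: subvf | exact: prodvSr].
move=> /subnK <-; elim: (s - r)%N => [|d IH]; first exact: subvv.
exact: subv_trans (radpowSn _) IH.
Qed.

Section PositiveGrading.

Variables (K : fieldType) (A : falgType K) (Ak : nat -> {vspace A}) (N : nat).
Hypothesis Ak_ge : forall n, (N <= n)%N -> Ak n = 0%VS.
Hypothesis Ak_full : (\sum_(n < N) Ak n)%VS = fullv.
Hypothesis Ak_direct : directv (\sum_(n < N) Ak n)%VS.
Hypothesis AkM : forall m n, (Ak m * Ak n <= Ak (m + n)%N)%VS.

Definition tailv r := (\sum_(i < N | (r <= i)%N) Ak i)%VS.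

Lemma graded_eq0 n x : (N <= n)%N -> x \in Ak n -> x = 0.
Proof. by move=> /Ak_ge->; rewrite memv0 => /eqP. Qed.

Lemma memv_gradedM m n x y :
  x \in Ak m -> y \in Ak n -> x * y \in Ak (m + n)%N.
Proof. by move=> xm yn; apply: (subvP (AkM m n)); apply: memv_mul. Qed.

Lemma memv_tailv r n x : (r <= n)%N -> x \in Ak n -> x \in tailv r.
Proof.
move=> rn xn; have [nN|Nn] := ltnP n N; last first.
  by rewrite (graded_eq0 Nn xn) mem0v.
apply: subvP xn.
exact: (@sumv_sup _ _ _ (Ordinal nN) (fun i : 'I_N => (r <= i)%N) _ _ rn).
Qed.

Lemma tailv0 : tailv 0 = fullv.
Proof. by rewrite /tailv -Ak_full; apply: eq_bigl. Qed.

Lemma tailv_eq0 r : (N <= r)%N -> tailv r = 0%VS.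
Proof.
move=> Nr; rewrite /tailv big_pred0 // => i; apply/negbTE.
by rewrite -ltnNge (leq_trans (ltn_ord i)).
Qed.

Lemma memv_tailvM r s x y :
  x \in tailv r -> y \in tailv s -> x * y \in tailv (r + s)%N.
Proof.
move=> /memv_sumP[u uA ->] /memv_sumP[v vA ->].
rewrite mulr_suml; apply: rpred_sum => i ri; rewrite mulr_sumr.
apply: rpred_sum => j sj; apply: (@memv_tailv _ (i + j)%N).
  by rewrite leq_add.
exact: memv_gradedM (uA i ri) (vA j sj).
Qed.

Lemma graded_tailv_eq0 n x : x \in Ak n -> x \in tailv n.+1 -> x = 0.
Proof.
move=> xn xT; have [nN|Nn] := ltnP n N; last exact: graded_eq0 Nn xn.
move/directv_sumP: Ak_direct => /(_ (Ordinal nN) isT) capAk.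
apply/eqP; rewrite -memv0 -capAk memv_cap xn /=.
apply: subvP xT; apply/subv_sumP => j nj; apply: (sumv_sup j) => //.
by rewrite neq_ltn nj orbT.
Qed.

Lemma graded_sum_inj (f g : nat -> A) :
  (forall i, f i \in Ak i) -> (forall i, g i \in Ak i) ->
  \sum_(i < N) f i = \sum_(i < N) g i -> forall i, f i = g i.
Proof.
move=> fA gA fg i; have [iN|Ni] := ltnP i N; last first.
  by rewrite (graded_eq0 Ni (fA i)) (graded_eq0 Ni (gA i)).
apply/eqP; rewrite -subr_eq0; apply/eqP.
move/directv_sum_independent: Ak_direct => /(_ (fun j : 'I_N => f j - g j)).
move=> /(_ _ _ (Ordinal iN)); apply=> // [j _|]; first exact: memvB.
by rewrite sumrB fg subrr.
Qed.

Lemma graded_sum_component (f : nat -> A) n x :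
  (forall i, f i \in Ak i) -> x \in Ak n -> x = \sum_(i < N) f i -> f n = x.
Proof.
move=> fA xn xf; have [nN|Nn] := ltnP n N; last first.
  by rewrite (graded_eq0 Nn xn) (graded_eq0 Nn (fA n)).
pose g i := if i == n then x else 0.
have gA i : g i \in Ak i by rewrite /g; case: eqP => [->|]; rewrite ?mem0v.
suff /graded_sum_inj/(_ n) : \sum_(i < N) f i = \sum_(i < N) g i.
  by rewrite /g eqxx; apply.
by rewrite -xf /g -big_mkcond /= (big_pred1 (Ordinal nN)).
Qed.

Lemma graded_decomp0 x :
  exists x0 x1, [/\ x0 \in Ak 0, x1 \in tailv 1 & x = x0 + x1].
Proof.
have /memv_sum_natP[f [fA _ ->]] : x \in tailv 0 by rewrite tailv0 memvf.
have N_gt0 : (0 < N)%N.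
  rewrite lt0n; apply/eqP => N0; have := memvf (1 : A).
  by rewrite -Ak_full N0 big_ord0 memv0 oner_eq0.
rewrite (bigD1 (Ordinal N_gt0)) //=.
exists (f 0%N), (\sum_(i < N | i != Ordinal N_gt0) f i); split=> //.
apply: rpred_sum => i i0; apply: memv_tailv (fA i).
by rewrite lt0n; apply: contra i0 => /eqP i0; apply/eqP/val_inj.
Qed.

Lemma graded_one : 1 \in Ak 0.
Proof.
have [e0 [e1 [e0A e1T one_e]]] := graded_decomp0 1.
suff e1_0 : e1 = 0 by rewrite one_e e1_0 addr0.
have e1_ann n y : y \in Ak n -> e1 * y = 0.
  move=> yn; apply: (@graded_tailv_eq0 n).
    have -> : e1 * y = y - e0 * y.
      by rewrite -{2}[y]mul1r one_e mulrDl [e0 * y + _]addrC addrK.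
    by rewrite memvB //; apply: memv_gradedM e0A yn.
  exact: memv_tailvM e1T (memv_tailv (leqnn n) yn).
have /memv_sum_natP[f [fA _ one_f]] : (1 : A) \in tailv 0.
  by rewrite tailv0 memvf.
by rewrite -[e1]mulr1 one_f mulr_sumr big1 // => i _; apply: e1_ann (fA i).
Qed.

Lemma graded_mul_eq1_deg0 a0 a1 b0 b1 :
  a0 \in Ak 0 -> a1 \in tailv 1 -> b0 \in Ak 0 -> b1 \in tailv 1 ->
  (a0 + a1) * (b0 + b1) = 1 -> a0 * b0 = 1.
Proof.
move=> a0A a1T b0A b1T ab1.
suff : 1 - a0 * b0 = 0 by move/eqP; rewrite subr_eq0 => /eqP.
apply: (@graded_tailv_eq0 0).
  by rewrite memvB ?graded_one //; apply: memv_gradedM a0A b0A.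
have -> : 1 - a0 * b0 = a0 * b1 + a1 * (b0 + b1).
  rewrite -ab1 mulrDl [a0 * _]mulrDr -[a0 * b0 + _ + _]addrA.
  by rewrite [a0 * b0 + _]addrC addrK.
rewrite memvD //.
  by apply: (@memv_tailvM 0 1); rewrite ?tailv0 ?memvf.
by apply: (@memv_tailvM 1 0); rewrite ?tailv0 ?memvf.
Qed.

Lemma jacobson_radical_tailv1 (J : {vspace A}) :
  is_jacobson_radical J -> semisimple_subalg (Ak 0) -> J = tailv 1.
Proof.
move=> radJ Ak0_ss; apply/eqP; rewrite eqEsubv; apply/andP; split.
  apply/subvP => x /radJ xJ; have [x0 [x1 [x0A x1T x_def]]] := graded_decomp0 x.
  rewrite x_def in xJ *.
  suff -> : x0 = 0 by rewrite add0r.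
  apply: Ak0_ss => // y yA; have [z _ [zl zr]] := xJ y.
  have [z0 [z1 [z0A z1T z_def]]] := graded_decomp0 z.
  have u_def : 1 - y * (x0 + x1) = (1 - y * x0) + - (y * x1).
    by rewrite mulrDr opprD addrA.
  have u0A : 1 - y * x0 \in Ak 0.
    by rewrite memvB ?graded_one //; apply: memv_gradedM yA x0A.
  have u1T : - (y * x1) \in tailv 1.
    by rewrite memvN; apply: (@memv_tailvM 0 1) x1T; apply: memv_tailv yA.
  exists z0 => //; rewrite u_def z_def in zl zr; split.
    exact: graded_mul_eq1_deg0 z0A z1T u0A u1T zl.
  exact: graded_mul_eq1_deg0 u0A u1T z0A z1T zr.
apply/subvP => x xT; apply/radJ => y.
have yxT : y * x \in tailv 1.
  by apply: (@memv_tailvM 0 1) xT; rewrite tailv0 memvf.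
have yx_pow k : (y * x) ^+ k \in tailv k.
  elim: k => [|k IH]; first by rewrite tailv0 memvf.
  by rewrite exprS; apply: (@memv_tailvM 1 k).
apply: (@unit_1B_nilpotent _ _ _ N); apply/eqP.
by rewrite -memv0 -(tailv_eq0 (leqnn N)) yx_pow.
Qed.

Lemma radpow_tailv1_sub r : (radpow (tailv 1) r <= tailv r)%VS.
Proof.
elim: r => [|r IH]; first by rewrite tailv0.
by apply/prodvP => u v uT /(subvP IH) vT; apply: (@memv_tailvM 1 r).
Qed.

Lemma prodfv_radpow_tailv1 r :
  (fullv * radpow (tailv 1) r <= radpow (tailv 1) r)%VS.
Proof.
case: r => [|r]; first exact: subvf.
rewrite [radpow _ r.+1]/= prodvA; apply: prodvSl; apply/prodvP => u v _ vT.
by apply: (@memv_tailvM 0 1); rewrite ?tailv0 ?memvf.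
Qed.

Hypothesis Ak_gen : agenv (Ak 0 + Ak 1)%VS = fullv.

Lemma graded_sub_radpow n : (Ak n <= radpow (tailv 1) n)%VS.
Proof.
pose R := radpow (tailv 1); pose W := (\sum_(i < N) (Ak i :&: R i))%VS.
have memW i x : x \in Ak i -> x \in R i -> x \in W.
  move=> xi xR; have [iN|Ni] := ltnP i N; last first.
    by rewrite (graded_eq0 Ni xi) mem0v.
  apply: subvP (@sumv_sup _ _ _ (Ordinal iN) xpredT _ _ isT (subvv _)) _ _.
  by rewrite memv_cap xi.
have W_full : (fullv <= W)%VS.
  rewrite -Ak_gen; apply: agenv_sub_modl.
    by rewrite -memvE; apply: memW; [exact: graded_one | exact: memvf].
  apply/prodvP => u w /memv_addP[u0 u0A [u1 u1A ->]] /memv_sumP[ws wsW ->].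
  rewrite mulrDl !mulr_sumr; apply: memvD; apply: rpred_sum => i _;
    have /memv_capP[wiA wiR] := wsW i isT.
    apply: memW; first exact: memv_gradedM u0A wiA.
    exact: subvP (prodfv_radpow_tailv1 i) _ (memv_mul (memvf u0) wiR).
  apply: (@memW i.+1); first exact: memv_gradedM u1A wiA.
  exact: memv_mul (memv_tailv (leqnn 1) u1A) wiR.
apply/subvP => x xn.
have /(@memv_sum_natP _ _ (fun i => Ak i :&: R i)%VS xpredT)[f [fW _ x_def]] :=
  subvP W_full x (memvf x).
have fA i : f i \in Ak i by case/memv_capP: (fW i).
by rewrite -(graded_sum_component fA xn x_def); case/memv_capP: (fW n).
Qed.

Lemma radpow_tailv1 r : radpow (tailv 1) r = tailv r.
Proof.
apply/eqP; rewrite eqEsubv radpow_tailv1_sub; apply/subv_sumP => i ri.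
exact: subv_trans (graded_sub_radpow i) (radpowS _ ri).
Qed.

Variables (a : A -> Prop) (ag : nat -> A -> Prop).
Hypothesis a0 : a 0.
Hypothesis aD : forall x y, a x -> a y -> a (x + y).
Hypothesis ag0 : forall r, ag r 0.
Hypothesis ag_sub : forall r x, ag r x -> a x.
Hypothesis ag_graded : forall r x, ag r x -> x \in Ak r.
Hypothesis ag_span : forall x, a x ->
  exists B (f : nat -> A), (forall i, ag i (f i)) /\ x = \sum_(i < B) f i.

Lemma lattice_decomp x :
  a x -> exists2 f : nat -> A, (forall i, ag i (f i)) & x = \sum_(i < N) f i.
Proof.
move=> /ag_span[B [f [fa ->]]]; pose g i := if (i < B)%N then f i else 0.
have ga i : ag i (g i) by rewrite /g; case: ifP => _; [apply: fa | apply: ag0].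
exists g => //.
have gB i : (B <= i)%N -> g i = 0 by rewrite /g ltnNge => ->.
have gN i : (N <= i)%N -> g i = 0.
  by move=> Ni; apply: graded_eq0 Ni (ag_graded (ga i)).
rewrite -(big_ord_vanish gN (leq_maxr B N)) (big_ord_vanish gB (leq_maxl B N)).
by apply: eq_bigr => i _; rewrite /g ltn_ord.
Qed.

Lemma lattice_graded r x : ag r x <-> a x /\ x \in Ak r.
Proof.
split=> [xr | [/lattice_decomp[f fa x_def] xr]].
  by split; [apply: ag_sub xr | apply: ag_graded xr].
by rewrite -(graded_sum_component (fun i => ag_graded (fa i)) xr x_def).
Qed.

Lemma tail_sum_tailv r x : tail_sum ag r x <-> a x /\ x \in tailv r.
Proof.
split=> [[B [f [fa ->]]] | [ax xT]].
  rewrite big_geq_mkord; split.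
    by apply: big_ind => // i _; apply: ag_sub (fa i).
  by apply: rpred_sum => i ri; apply: memv_tailv ri (ag_graded (fa i)).
have [f fa x_def] := lattice_decomp ax.
have /(memv_sum_natP (P := leq r))[g [gA g_lt x_def']] := xT.
have fg := graded_sum_inj (fun i => ag_graded (fa i)) gA
  (etrans (esym x_def) x_def').
exists N, f; split=> //; rewrite x_def big_geq_mkord [RHS]big_mkcond.
by apply: eq_bigr => i _; case: ifP => // /negbT/g_lt <-; apply: fg.
Qed.

Lemma tail_sum_radt r x : tail_sum ag r x <-> radt (tailv 1) a r x.
Proof. by rewrite /radt radpow_tailv1 //; apply: tail_sum_tailv. Qed.

Lemma gr_canonical_iso_tailv : gr_canonical_iso (tailv 1) a ag.
Proof.
split=> [r x xr | r x xr [_] | r z /tail_sum_radt[B [f [fa ->]]]].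
- split; first exact: ag_sub xr.
  by rewrite radpow_tailv1 //; apply: memv_tailv (leqnn r) (ag_graded xr).
- by rewrite radpow_tailv1 //; apply: graded_tailv_eq0 (ag_graded xr).
have [rB|Br] := ltnP r B.
  exists (f r) => //; rewrite big_ltn // [f r + _]addrC addrK.
  by apply/tail_sum_radt; exists B, f.
exists 0; first exact: ag0.
rewrite big_geq // subr0; apply/tail_sum_radt.
by exists B, f; rewrite big_geq // leqW.
Qed.

End PositiveGrading.

Lemma Ospan0 (K : fieldType) (O : {pred K}) (V : lmodType K) (s : seq V) :
  addr_closed O -> Ospan O s 0.
Proof.
case=> O0 _; exists (fun _ => 0); split=> //.
by rewrite big1 // => i _; rewrite scale0r.
Qed.

Lemma OspanD (K : fieldType) (O : {pred K}) (V : lmodType K) (s : seq V) x y :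
  addr_closed O -> Ospan O s x -> Ospan O s y -> Ospan O s (x + y).
Proof.
case=> _ OD [c [cO ->]] [d [dO ->]]; exists (fun i => c i + d i); split.
  by move=> i; apply: OD.
by rewrite -big_split; apply: eq_bigr => i _; rewrite scalerDl.
Qed.

Lemma DVR_addr_closed (K : fieldType) (O : {pred K}) :
  is_DVR_of O -> addr_closed O.
Proof.
case=> O1 OB _ _; have O0 : 0 \in O by rewrite -(subrr 1) OB.
by split=> // x y xO yO; rewrite -[y]opprK -[- y]sub0r OB ?OB.
Qed.

Section ProductSpan.

Variables (K : fieldType) (A : falgType K) (V : lmodType K) (act : A -> V -> V).

Lemma prod_span_sub (X X' : A -> Prop) (M M' : V -> Prop) v :
  (forall x, X x -> X' x) -> (forall m, M m -> M' m) ->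
  prod_span act X M v -> prod_span act X' M' v.
Proof.
move=> XX' MM' [s [sXM ->]]; exists s; split=> // p ps.
by case: (sXM p ps) => Xp Mp; split; [apply: XX' | apply: MM'].
Qed.

Lemma prod_span0 (X : A -> Prop) (M : V -> Prop) : prod_span act X M 0.
Proof. by exists [::]; split=> //; rewrite big_nil. Qed.

Lemma prod_spanD (X : A -> Prop) (M : V -> Prop) v w :
  prod_span act X M v -> prod_span act X M w -> prod_span act X M (v + w).
Proof.
move=> [s [sXM ->]] [t [tXM ->]]; exists (s ++ t).
split; last by rewrite big_cat.
by move=> p; rewrite mem_cat => /orP[/sXM|/tXM].
Qed.

Lemma prod_span_closed (X : A -> Prop) (M : V -> Prop) v :
  M 0 -> (forall x y, M x -> M y -> M (x + y)) ->
  (forall x m, X x -> M m -> M (act x m)) ->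
  prod_span act X M v -> M v.
Proof.
move=> M0 MD Mact [s [sXM ->]]; rewrite big_seq.
by apply: (big_ind M) => // p /sXM[]; apply: Mact.
Qed.

End ProductSpan.

Lemma module_act0 (K : fieldType) (A : falgType K) (V : lmodType K)
    (act : A -> V -> V) v :
  is_module_action act -> act 0 v = 0.
Proof.
case=> actDl _ _ _; have := actDl 1 0 0 v; rewrite !scale1r addr0.
by rewrite -{1}[act 0 v]addr0 => /addrI.
Qed.

Section GradedLattice.

Variables (K : fieldType) (A : falgType K) (V : lmodType K) (act : A -> V -> V).
Hypothesis act_module : is_module_action act.
Variables (J : {vspace A}) (N : nat) (a : A -> Prop) (ag : nat -> A -> Prop).
Hypothesis radpow_N : radpow J N = 0%VS.
Hypothesis tail_sum_radt : forall r x, tail_sum ag r x <-> radt J a r x.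
Variable M : V -> Prop.
Hypotheses (M0 : M 0) (MD : forall v w, M v -> M w -> M (v + w)).
Hypothesis M_act : forall x v, a x -> M v -> M (act x v).

Lemma gr_generated_tight :
  gr_generated_in_degree0 act J a M -> tight_lattice act J a M.
Proof.
move=> gen.
have radtM_span d r z : (N <= r + d)%N -> radtM act J M r z ->
    prod_span act (radt J a r) M z.
  elim: d r z => [|d IH] r z.
    rewrite addn0 => Nr [_ [s [sJ ->]]].
    rewrite big1_seq; first exact: prod_span0.
    move=> p /andP[_ /sJ[pJ _]]; move/(subvP (radpowS J Nr)): pJ.
    by rewrite radpow_N memv0 => /eqP->; apply: module_act0.
  move=> Nrd z_rad; have [w w_span zw_rad] := gen r z z_rad.
  rewrite -(subrK w z); apply: prod_spanD w_span.
  apply: prod_span_sub (IH r.+1 _ _ zw_rad) => // [x [ax xJ]|].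
    by split=> //; apply: subvP (radpowS J (leqnSn r)) _ xJ.
  by rewrite addSnnS.
move=> r v; split=> [v_rad | v_span].
  exact: radtM_span N r v (leq_addl _ _) v_rad.
split; last by apply: prod_span_sub v_span => // x [].
by apply: prod_span_closed v_span => // x m [ax _]; apply: M_act.
Qed.

Lemma tight_lattice_tfae :
  [<-> tight_lattice act J a M;
       forall r v, prod_span act (tail_sum ag r) M v <-> radtM act J M r v;
       gr_generated_in_degree0 act J a M].
Proof.
tfae.
- move=> tight r v; split=> [v_span | /tight].
    by apply/tight; apply: prod_span_sub v_span => // x /tail_sum_radt.
  by apply: prod_span_sub => // x /tail_sum_radt.
- move=> tail_span r z z_rad; exists z.
    by apply: prod_span_sub ((tail_span r z).2 z_rad) => // x /tail_sum_radt.
  by rewrite subrr; split; [exact: M0 | exact: prod_span0].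
- exact: gr_generated_tight.
Qed.

End GradedLattice.

Theorem proposition5p2
  (K : fieldType) (O : {pred K}) (HO : is_DVR_of O)
  (A : falgType K) (Ak : nat -> {vspace A}) (HAk : is_tight_grading Ak)
  (J : {vspace A}) (HJ : is_jacobson_radical J)
  (b : seq A) (Hb : basis_of fullv b)
  (Ha1 : Ospan O b 1)
  (HaM : forall x y, Ospan O b x -> Ospan O b y -> Ospan O b (x * y))
  (ag : nat -> A -> Prop) (Hag : is_pos_grading_O O (Ospan O b) ag)
  (HagK : forall r x, Kspan (ag r) x <-> x \in Ak r) :
  [/\ forall r x, ag r x <-> (Ospan O b x /\ x \in Ak r),
      (forall r x, tail_sum ag r x <-> (Ospan O b x /\ x \in radpow J r)),
      gr_canonical_iso J (Ospan O b) ag &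
      forall (V : vectType K) (act : A -> V -> V) (m : seq V),
        is_module_action act ->
        (<<m>>%VS = fullv) ->
        (forall x v, Ospan O b x -> Ospan O m v -> Ospan O m (act x v)) ->
        [<-> tight_lattice act J (Ospan O b) (Ospan O m);
             (forall r v, prod_span act (tail_sum ag r) (Ospan O m) v
                          <-> radtM act J (Ospan O m) r v);
             gr_generated_in_degree0 act J (Ospan O b) (Ospan O m)]].
Proof.
have O_add := DVR_addr_closed HO.
have b0 : Ospan O b 0 := Ospan0 b O_add.
have bD x y : Ospan O b x -> Ospan O b y -> Ospan O b (x + y) := OspanD O_add.
case: HAk => [[[N [Ak_ge [Ak_full Ak_direct]]] AkM] Ak0_ss Ak_gen].
case: Hag => ag_submod ag_sub ag_span _ _.
have ag0 r : ag r 0 by case: (ag_submod r).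
have ag_graded r x : ag r x -> x \in Ak r.
  move=> xr; apply/HagK; exists [:: (1, x)]; rewrite big_seq1 scale1r.
  by split=> // p; rewrite inE => /eqP->.
rewrite (jacobson_radical_tailv1 Ak_ge Ak_full Ak_direct AkM HJ Ak0_ss).
split=> [r x||| V act m act_module _ m_act].
- by apply: (lattice_graded (N := N)).
- by apply: (tail_sum_radt (N := N)).
- by apply: (gr_canonical_iso_tailv (N := N)).
apply: tight_lattice_tfae => //.
- by rewrite radpow_tailv1 // tailv_eq0.
- by apply: (tail_sum_radt (N := N)).
- exact: Ospan0 m O_add.
- by move=> v w; apply: OspanD O_add.
Qed.
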